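(* Let $G_{FL}=(\omega^{<\omega},c_{00}(\omega))$ and equip $c_{00}(\omega)$ with the ultrametric $d(R,R')=\frac{1}{\Delta(R,R')+1}$ for $R\neq R'$ and $d(R,R)=0$. The map $\varphi\colon \mathrm{Aut}(G_{FL})\to \mathrm{Iso}(c_{00}(\omega),d)$, $\varphi(f)=\bar f|_{c_{00}(\omega)}$, is a well-defined group isomorphism from the automorphism group of $G_{FL}$ in $\mathbf{Games}_A$ onto the group of surjective isometries of $(c_{00}(\omega),d)$ onto itself.
   Context: $c_{00}(\omega)$ is the set of eventually zero sequences in $\omega^\omega$; for distinct $R,R'\in\omega^\omega$, $\Delta(R,R')=\min\{n<\omega:R(n)\neq R'(n)\}$. A map $f\colon\omega^{<\omega}\to\omega^{<\omega}$ is chronological if $|f(t)|=|t|$ and $f(t\restriction k)=f(t)\restriction k$ for all $t$ and $k\le|t|$ (with $|t|$ the length and $t\restriction k$ the initial segment of length $k$); it induces $\bar f\colon\omega^\omega\to\omega^\omega$ with $\bar f(R)\restriction n=f(R\restriction n)$. An automorphism of $G_{FL}$ in $\mathbf{Games}_A$ is a bijective chronological map $f\colon\omega^{<\omega}\to\omega^{<\omega}$ with $\bar f[c_{00}(\omega)]=c_{00}(\omega)$; the group operation is composition. *)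

From Stdlib Require Import Reals List Arith ClassicalEpsilon.
Import ListNotations.
Open Scope R_scope.

(* omega^omega = nat -> nat ; omega^{<omega} = list nat *)
Definition seqw := nat -> nat.
Definition finseq := list nat.

Definition is_c00 (R : seqw) : Prop := exists N, forall n, (N <= n)%nat -> R n = 0%nat.

Definition restr (R : seqw) (n : nat) : finseq := map R (seq 0 n).

(* Delta(R,R') = min { n | R n <> R' n } (meaningful for R <> R') *)
Definition is_Delta (R R' : seqw) (n : nat) : Prop :=
  R n <> R' n /\ forall m, (m < n)%nat -> R m = R' m.
Definition Delta (R R' : seqw) : nat := epsilon (inhabits 0%nat) (is_Delta R R').

Definition dist (x y : seqw) : Stdlib.Reals.Rdefinitions.R :=
  if excluded_middle_informative (x = y) then 0
  else / INR (Delta x y + 1).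

Definition chronological (f : finseq -> finseq) : Prop :=
  forall t, length (f t) = length t /\
            forall k, (k <= length t)%nat -> f (firstn k t) = firstn k (f t).

(* induced map: fbar f R restricted to n = f (R restricted to n) *)
Definition fbar (f : finseq -> finseq) (R : seqw) : seqw :=
  fun n => nth n (f (restr R (S n))) 0%nat.

Definition bijective_map (f : finseq -> finseq) : Prop :=
  (forall s t, f s = f t -> s = t) /\ (forall u, exists t, f t = u).

Definition is_aut (f : finseq -> finseq) : Prop :=
  bijective_map f /\ chronological f /\
  (forall R, is_c00 R -> is_c00 (fbar f R)) /\
  (forall R', is_c00 R' -> exists R, is_c00 R /\ fbar f R = R').

Definition is_c00_iso (h : seqw -> seqw) : Prop :=
  (forall R, is_c00 R -> is_c00 (h R)) /\
  (forall R R', is_c00 R -> is_c00 R' -> dist (h R) (h R') = dist R R') /\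
  (forall R', is_c00 R' -> exists R, is_c00 R /\ h R = R').

(* Two sequences are at distance at most 1/(k+1) exactly when they agree on
   their first k entries, so the isometries of (c00, d) are the maps that
   preserve the length of common initial segments.  A chronological bijection
   f does so, because fbar f R restricted to k is f (R restricted to k).
   Conversely an isometry h is induced by t |-> h (t padded with zeros)
   restricted to |t|: padding with zeros keeps t inside c00, and the value
   only depends on t since h preserves agreement lengths. *)

From Pilot Require Import Defs.
From Stdlib Require Import Reals List Arith ClassicalEpsilon.
From Stdlib Require Import Lia Lra Classical FunctionalExtensionality PropExtensionality.

Definition agree (k : nat) (X Y : seqw) : Prop := forall m, (m < k)%nat -> X m = Y m.

Lemma agree_all X Y : (forall k, agree k X Y) -> X = Y.
Proof.
  intro H. apply functional_extensionality. intro n. apply (H (S n)). lia.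
Qed.

Lemma length_restr X k : length (restr X k) = k.
Proof. unfold restr. rewrite length_map, length_seq. reflexivity. Qed.

Lemma nth_restr X k m : (m < k)%nat -> nth m (restr X k) 0%nat = X m.
Proof.
  intro Hm. unfold restr.
  rewrite nth_indep with (d' := X 0%nat) by (rewrite length_map, length_seq; lia).
  rewrite map_nth, seq_nth; auto.
Qed.

Lemma restr_eq_agree X Y k : restr X k = restr Y k <-> agree k X Y.
Proof.
  split.
  - intros H m Hm. rewrite <- (nth_restr X k m Hm), <- (nth_restr Y k m Hm), H.
    reflexivity.
  - intros H. apply nth_ext with (d := 0%nat) (d' := 0%nat).
    + rewrite !length_restr; reflexivity.
    + intros m Hm. rewrite length_restr in Hm. rewrite !nth_restr by lia. auto.
Qed.

Lemma firstn_restr X k n : (k <= n)%nat -> firstn k (restr X n) = restr X k.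
Proof.
  intro Hk. apply nth_ext with (d := 0%nat) (d' := 0%nat).
  - rewrite length_firstn, !length_restr. lia.
  - intros m Hm. rewrite length_firstn, length_restr in Hm.
    rewrite nth_firstn. destruct (Nat.ltb_spec m k); [|lia].
    rewrite !nth_restr by lia. reflexivity.
Qed.

Definition ext (t : finseq) : seqw := fun n => nth n t 0%nat.

Lemma ext_c00 t : is_c00 (ext t).
Proof. exists (length t). intros n Hn. unfold ext. apply nth_overflow. auto. Qed.

Lemma restr_ext t : restr (ext t) (length t) = t.
Proof.
  apply nth_ext with (d := 0%nat) (d' := 0%nat).
  - apply length_restr.
  - intros m Hm. rewrite length_restr in Hm. rewrite nth_restr by auto. reflexivity.
Qed.

Lemma agree_ext_restr X n : agree n (ext (restr X n)) X.
Proof. intros m Hm. apply nth_restr. auto. Qed.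

Lemma agree_ext_firstn t k : agree k (ext (firstn k t)) (ext t).
Proof.
  intros m Hm. unfold ext. rewrite nth_firstn.
  destruct (Nat.ltb_spec m k); [reflexivity|lia].
Qed.

Lemma restr_fbar f X n : chronological f -> restr (fbar f X) n = f (restr X n).
Proof.
  intro Hc. apply nth_ext with (d := 0%nat) (d' := 0%nat).
  - rewrite length_restr. destruct (Hc (restr X n)) as [Hl _].
    rewrite Hl, length_restr. auto.
  - intros m Hm. rewrite length_restr in Hm. rewrite nth_restr by lia.
    unfold fbar. rewrite <- (firstn_restr X (S m) n) by lia.
    destruct (Hc (restr X n)) as [_ Hf]. rewrite Hf by (rewrite length_restr; lia).
    rewrite nth_firstn. destruct (Nat.ltb_spec m (S m)); [reflexivity|lia].
Qed.

Lemma is_Delta_exists X Y n : X n <> Y n -> exists d, is_Delta X Y d.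
Proof.
  induction n as [n IH] using lt_wf_ind. intro Hn.
  destruct (classic (exists m, (m < n)%nat /\ X m <> Y m)) as [[m [Hm1 Hm2]]|Hno].
  - exact (IH m Hm1 Hm2).
  - exists n. split; auto. intros m Hm. apply NNPP. intro C. apply Hno. eauto.
Qed.

Lemma Delta_spec X Y : X <> Y -> is_Delta X Y (Defs.Delta X Y).
Proof.
  intro H. unfold Defs.Delta. apply epsilon_spec.
  apply NNPP. intro C. apply H. apply functional_extensionality. intro n.
  apply NNPP. intro Hn. apply C. exact (is_Delta_exists X Y n Hn).
Qed.

Lemma is_Delta_agree X Y n : is_Delta X Y n <-> agree n X Y /\ ~ agree (S n) X Y.
Proof.
  split.
  - intros [H1 H2]. split; [exact H2|]. intro C. apply H1. apply C. lia.
  - intros [H1 H2]. split; [|exact H1]. intro C. apply H2. intros m Hm.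
    destruct (Nat.eq_dec m n); [subst; auto | apply H1; lia].
Qed.

Lemma dist_eq_agree X Y Z W :
  (forall k, agree k X Y <-> agree k Z W) -> Defs.dist X Y = Defs.dist Z W.
Proof.
  intro H.
  assert (HD : is_Delta X Y = is_Delta Z W).
  { apply functional_extensionality. intro n. apply propositional_extensionality.
    rewrite !is_Delta_agree, !H. tauto. }
  unfold Defs.dist, Defs.Delta. rewrite HD.
  destruct (excluded_middle_informative (X = Y)) as [->|nXY];
  destruct (excluded_middle_informative (Z = W)) as [->|nZW]; auto; exfalso.
  - apply nZW, agree_all. intro k. apply H. intros m _; auto.
  - apply nXY, agree_all. intro k. apply H. intros m _; auto.
Qed.

Lemma dist_le_agree X Y k : Defs.dist X Y <= / INR (k + 1) <-> agree k X Y.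
Proof.
  assert (Hk : 0 < INR (k + 1)) by (apply lt_0_INR; lia).
  unfold Defs.dist. destruct (excluded_middle_informative (X = Y)) as [->|nXY].
  - split; intros _.
    + intros m _; auto.
    + left. apply Rinv_0_lt_compat. auto.
  - destruct (Delta_spec X Y nXY) as [HD1 HD2]. set (D := Defs.Delta X Y) in *.
    assert (HD : 0 < INR (D + 1)) by (apply lt_0_INR; lia).
    split; intro H; destruct (le_lt_dec k D) as [HkD|HDk].
    + intros m Hm. apply HD2. lia.
    + exfalso. assert (INR (D + 1) < INR (k + 1)) by (apply lt_INR; lia).
      assert (/ INR (k + 1) < / INR (D + 1)).
      { apply Rinv_lt_contravar; auto. apply Rmult_lt_0_compat; auto. }
      lra.
    + apply Rinv_le_contravar; auto. apply le_INR. lia.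
    + exfalso. apply HD1, H. auto.
Qed.

Lemma c00_iso_agree h X Y k : is_c00_iso h -> is_c00 X -> is_c00 Y ->
  agree k (h X) (h Y) <-> agree k X Y.
Proof.
  intros [_ [Hd _]] HX HY. rewrite <- !dist_le_agree, Hd by auto. tauto.
Qed.

Lemma aut_fbar_c00_iso f : is_aut f -> is_c00_iso (fbar f).
Proof.
  intros [[Hinj _] [Hc [Hc00 Hsurj]]]. split; [exact Hc00|split; [|exact Hsurj]].
  intros X Y _ _. apply dist_eq_agree. intro k.
  rewrite <- !restr_eq_agree, !restr_fbar by auto.
  split; [apply Hinj | intros ->; reflexivity].
Qed.

Lemma fbar_comp f g X : chronological g ->
  fbar (fun t => f (g t)) X = fbar f (fbar g X).
Proof.
  intro Hg. apply functional_extensionality. intro n.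
  unfold fbar at 1 2. rewrite <- (restr_fbar g X (S n) Hg). reflexivity.
Qed.

Lemma chronological_fbar_inj f g : chronological f -> chronological g ->
  (forall X, is_c00 X -> fbar f X = fbar g X) -> forall t, f t = g t.
Proof.
  intros Hf Hg H t.
  rewrite <- (restr_ext t), <- (restr_fbar f), <- (restr_fbar g) by auto.
  rewrite H by apply ext_c00. reflexivity.
Qed.

Section IsometryInducedMap.

Variable h : seqw -> seqw.
Hypothesis h_iso : is_c00_iso h.

Definition iso_map (t : finseq) : finseq := restr (h (ext t)) (length t).

Lemma iso_map_chronological : chronological iso_map.
Proof.
  intro t. split; [apply length_restr|]. intros k Hk. unfold iso_map.
  rewrite length_firstn. replace (Nat.min k (length t)) with k by lia.
  rewrite firstn_restr by auto. apply restr_eq_agree.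
  apply (c00_iso_agree h _ _ k h_iso (ext_c00 _) (ext_c00 _)).
  apply agree_ext_firstn.
Qed.

Lemma fbar_iso_map X : is_c00 X -> fbar iso_map X = h X.
Proof.
  intros HX. apply functional_extensionality. intro n.
  unfold fbar, iso_map. rewrite length_restr, nth_restr by lia.
  apply (c00_iso_agree h _ _ (S n) h_iso (ext_c00 _) HX); [|lia].
  apply agree_ext_restr.
Qed.

Lemma iso_map_inj s t : iso_map s = iso_map t -> s = t.
Proof.
  intro E.
  assert (Hl : length s = length t).
  { rewrite <- (length_restr (h (ext s)) (length s)),
            <- (length_restr (h (ext t)) (length t)).
    exact (f_equal (@length nat) E). }
  unfold iso_map in E. rewrite Hl in E. apply restr_eq_agree in E.
  apply (c00_iso_agree h _ _ _ h_iso (ext_c00 _) (ext_c00 _)) in E.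
  rewrite <- (restr_ext s), <- (restr_ext t), Hl. apply restr_eq_agree. exact E.
Qed.

Lemma iso_map_surj u : exists t, iso_map t = u.
Proof.
  destruct h_iso as [_ [_ Hsurj]].
  destruct (Hsurj (ext u) (ext_c00 u)) as [X [HX HXu]].
  exists (restr X (length u)). unfold iso_map. rewrite length_restr.
  transitivity (restr (h X) (length u)); [|rewrite HXu; apply restr_ext].
  apply restr_eq_agree, (c00_iso_agree h _ _ _ h_iso (ext_c00 _) HX).
  apply agree_ext_restr.
Qed.

Lemma iso_map_aut : is_aut iso_map.
Proof.
  destruct h_iso as [Hc00 [_ Hsurj]].
  split; [split; [exact iso_map_inj | exact iso_map_surj]|].
  split; [exact iso_map_chronological|split].
  - intros X HX. rewrite fbar_iso_map by auto. auto.
  - intros Y HY. destruct (Hsurj Y HY) as [X [HX <-]].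
    exists X. split; [exact HX | apply fbar_iso_map; exact HX].
Qed.

End IsometryInducedMap.

Theorem mainTheorem19 :
  (forall f, is_aut f -> is_c00_iso (fbar f)) /\
  (forall f g, is_aut f -> is_aut g ->
     forall R, is_c00 R -> fbar (fun t => f (g t)) R = fbar f (fbar g R)) /\
  (forall f g, is_aut f -> is_aut g ->
     (forall R, is_c00 R -> fbar f R = fbar g R) -> forall t, f t = g t) /\
  (forall h, is_c00_iso h ->
     exists f, is_aut f /\ forall R, is_c00 R -> fbar f R = h R).
Proof.
  split; [exact aut_fbar_c00_iso|split; [|split]].
  - intros f g _ [_ [Hg _]] R _. exact (fbar_comp f g R Hg).
  - intros f g [_ [Hf _]] [_ [Hg _]]. exact (chronological_fbar_inj f g Hf Hg).
  - intros h Hh. exists (iso_map h).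
    split; [exact (iso_map_aut h Hh) | exact (fbar_iso_map h Hh)].
Qed.
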